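(* For each $(\varepsilon,\delta)\in(0,1)\times(0,\delta_0]$, $$\mathcal R^\ast(\varepsilon,\delta|p_{X_1X_2},p_{K_1K_2})\subseteq\mathcal R_{\rm sw}(p_{X_1X_2}).$$
   Context: All logarithms are base 2. $\mathcal X_1,\mathcal X_2$ are finite fields. $(X_1,X_2)$ has joint pmf $p_{X_1X_2}$ on $\mathcal X_1\times\mathcal X_2$ and $(K_1,K_2)$ has joint pmf $p_{K_1K_2}$ on $\mathcal X_1\times\mathcal X_2$. For block length $n$, $(\mathbf X_1,\mathbf X_2)$ is i.i.d. with law $p^n_{X_1X_2}$ (source), $(\mathbf K_1,\mathbf K_2)$ is i.i.d. with law $p^n_{K_1K_2}$ (keys), and the keys are independent of the sources. A distributed source encryption system at block length $n$ consists of finite sets $\mathcal C_i^{(n)}$, encryption maps $\Phi_i^{(n)}:\mathcal X_i^n\times\mathcal X_i^n\to\mathcal C_i^{(n)}$ (key, plaintext) and a decryption map $\Psi^{(n)}:\mathcal X_1^n\times\mathcal X_2^n\times\mathcal C_1^{(n)}\times\mathcal C_2^{(n)}\to\mathcal X_1^n\times\mathcal X_2^n$, such that there exist maps $\phi_i^{(n)}:\mathcal X_i^n\to\mathcal M_i^{(n)}$ (finite $\mathcal M_i^{(n)}$) and $\psi^{(n)}$ with $\Psi^{(n)}(\mathbf k_1,\mathbf k_2,\Phi_1^{(n)}(\mathbf k_1,\mathbf x_1),\Phi_2^{(n)}(\mathbf k_2,\mathbf x_2))=\psi^{(n)}(\phi_1^{(n)}(\mathbf x_1),\phi_2^{(n)}(\mathbf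 x_2))$ for all keys and plaintexts. Ciphertexts: $C_i^{(n)}=\Phi_i^{(n)}(\mathbf K_i,\mathbf X_i)$. Correct decoding set $\mathcal D^{(n)}:=\{(\mathbf x_1,\mathbf x_2):\psi^{(n)}(\phi_1^{(n)}(\mathbf x_1),\phi_2^{(n)}(\mathbf x_2))=(\mathbf x_1,\mathbf x_2)\}$; error probability $p_{\rm e}:=\Pr[(\mathbf X_1,\mathbf X_2)\notin\mathcal D^{(n)}]$. Fix a constant $\delta_0>0$. For $(\varepsilon,\delta)\in(0,1)\times[0,\delta_0]$, $(R_1,R_2)$ is an $(\varepsilon,\delta)$-reliable and secure rate pair if there is a sequence of systems $\{(\Phi_1^{(n)},\Phi_2^{(n)},\Psi^{(n)})\}_{n\ge1}$ such that for every $\gamma>0$ there is $n_0$ with, for all $n\ge n_0$: $\frac1n\log|\mathcal C_i^{(n)}|\le R_i+\gamma$ ($i=1,2$), $p_{\rm e}\le\varepsilon$, and $I(C_1^{(n)}C_2^{(n)};\mathbf X_1\mathbf X_2)\le\delta$. $\mathcal R^\ast(\varepsilon,\delta|p_{X_1X_2},p_{K_1K_2})$ is the set of such pairs. $\mathcal R_{\rm sw}(p_{X_1X_2}):=\{(R_1,R_2):R_1\ge H(X_1|X_2),R_2\ge H(X_2|X_1),R_1+R_2\ge H(X_1X_2)\}$. *)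

From HB Require Import structures.
From mathcomp Require Import all_boot all_order all_algebra.
From mathcomp Require Import all_classical all_reals exp.
Set Implicit Arguments. Unset Strict Implicit. Unset Printing Implicit Defensive.
Import Order.TTheory GRing.Theory Num.Theory.
Local Open Scope ring_scope.

Section Defs.
Variable R : realType.

Definition log2 (x : R) : R := ln x / ln 2.

Definition is_pmf2 (A B : finType) (p : A -> B -> R) : Prop :=
  (forall a b, 0 <= p a b) /\ \sum_(a : A) \sum_(b : B) p a b = 1.

Definition marg1 (A B : finType) (p : A -> B -> R) (a : A) : R := \sum_(b : B) p a b.
Definition marg2 (A B : finType) (p : A -> B -> R) (b : B) : R := \sum_(a : A) p a b.

Definition joint_entropy (A B : finType) (p : A -> B -> R) : R :=
  - \sum_(a : A) \sum_(b : B) (if p a b == 0 then 0 else p a b * log2 (p a b)).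

Definition cond_entropy12 (A B : finType) (p : A -> B -> R) : R :=
  - \sum_(a : A) \sum_(b : B)
      (if p a b == 0 then 0 else p a b * log2 (p a b / marg2 p b)).

Definition cond_entropy21 (A B : finType) (p : A -> B -> R) : R :=
  - \sum_(a : A) \sum_(b : B)
      (if p a b == 0 then 0 else p a b * log2 (p a b / marg1 p a)).

Definition mutual_info (A B : finType) (P : A -> B -> R) : R :=
  \sum_(a : A) \sum_(b : B)
     (if P a b == 0 then 0 else P a b * log2 (P a b / (marg1 P a * marg2 P b))).

Definition iid (F1 F2 : finType) (p : F1 -> F2 -> R) (n : nat)
  (x1 : n.-tuple F1) (x2 : n.-tuple F2) : R :=
  \prod_(i < n) p (tnth x1 i) (tnth x2 i).

Definition R_sw (F1 F2 : finType) (p : F1 -> F2 -> R) (R1 R2 : R) : Prop :=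
  cond_entropy12 p <= R1 /\ cond_entropy21 p <= R2 /\ joint_entropy p <= R1 + R2.

End Defs.

(* A distributed source encryption system at block length n, together with
   the maps phi_1, phi_2, psi through which decryption factors. *)
Record dsystem (F1 F2 : finFieldType) (n : nat) := DSystem {
  C1 : finType;
  C2 : finType;
  Phi1 : n.-tuple F1 -> n.-tuple F1 -> C1;   (* (key, plaintext) *)
  Phi2 : n.-tuple F2 -> n.-tuple F2 -> C2;
  Psi : n.-tuple F1 -> n.-tuple F2 -> C1 -> C2 -> n.-tuple F1 * n.-tuple F2;
  M1 : finType;
  M2 : finType;
  phi1 : n.-tuple F1 -> M1;
  phi2 : n.-tuple F2 -> M2;
  psi : M1 -> M2 -> n.-tuple F1 * n.-tuple F2;
  factor : forall k1 k2 x1 x2,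
      Psi k1 k2 (Phi1 k1 x1) (Phi2 k2 x2) = psi (phi1 x1) (phi2 x2)
}.

Arguments C1 {F1 F2 n} d.
Arguments C2 {F1 F2 n} d.
Arguments Phi1 {F1 F2 n} d _ _.
Arguments Phi2 {F1 F2 n} d _ _.
Arguments Psi {F1 F2 n} d _ _ _ _.
Arguments M1 {F1 F2 n} d.
Arguments M2 {F1 F2 n} d.
Arguments phi1 {F1 F2 n} d _.
Arguments phi2 {F1 F2 n} d _.
Arguments psi {F1 F2 n} d _ _.

Section Sys.
Variable R : realType.
Variables (F1 F2 : finFieldType) (n : nat).
Variables (pX pK : F1 -> F2 -> R).
Variable S : dsystem F1 F2 n.

Definition decodes (x1 : n.-tuple F1) (x2 : n.-tuple F2) : bool :=
  psi S (phi1 S x1) (phi2 S x2) == (x1, x2).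

Definition err_prob : R :=
  \sum_(x1 : n.-tuple F1) \sum_(x2 : n.-tuple F2)
     (if decodes x1 x2 then 0 else iid pX x1 x2).

Definition joint_CX (c : C1 S * C2 S) (x : n.-tuple F1 * n.-tuple F2) : R :=
  \sum_(k1 : n.-tuple F1) \sum_(k2 : n.-tuple F2)
    (if (Phi1 S k1 x.1 == c.1) && (Phi2 S k2 x.2 == c.2)
     then iid pK k1 k2 * iid pX x.1 x.2 else 0).

Definition leak : R := mutual_info joint_CX.

End Sys.

Definition reliable_secure_rate (R : realType) (F1 F2 : finFieldType)
  (pX pK : F1 -> F2 -> R) (eps delta : R) (R1 R2 : R) : Prop :=
  exists sys : forall n : nat, dsystem F1 F2 n,
    forall gamma : R, 0 < gamma ->
      exists n0 : nat, forall n : nat, (n0 <= n)%N ->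
        log2 (#|C1 (sys n)|%:R) / n%:R <= R1 + gamma /\
        log2 (#|C2 (sys n)|%:R) / n%:R <= R2 + gamma /\
        err_prob pX (sys n) <= eps /\
        leak pX pK (sys n) <= delta.

(* Decryption factors through (phi1, phi2), so under fixed keys the
   ciphertext pair is injective on the correctly decoded set D; hence
   |D| <= |C1| |C2| and each section of D has at most |C1| (resp. |C2|) points.
   Writing p^n = nu * r^n, with r the conditional (resp. joint) pmf whose mean
   log-loss is the entropy H at stake, a threshold split on r^n gives
   P(D) <= th nu(D) + th^(-lam) (E r^lam)^n, where nu(D) is bounded by the
   counting above and E r^lam <= exp (- lam H ln 2 + O(lam^2)). A rate below H
   then makes P(D) decay exponentially, contradicting P(D) >= 1 - eps for any
   eps < 1. *)

From Pilot Require Import Defs.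
From HB Require Import structures.
From mathcomp Require Import all_boot all_order all_algebra.
From mathcomp Require Import all_classical all_reals exp.
From mathcomp Require Import sequences ring lra.
Set Implicit Arguments. Unset Strict Implicit. Unset Printing Implicit Defensive.
Import Order.TTheory GRing.Theory Num.Theory.
Local Open Scope ring_scope.

Section ExpLn.
Variable R : realType.

Lemma ln2_gt0 : 0 < ln (2 : R).
Proof. by apply: ln_gt0; rewrite ltr1n. Qed.

Lemma expR_le_quadratic (t : R) : t <= 0 -> expR t <= 1 + t + t ^+ 2.
Proof.
move=> t_le0; rewrite -(ler_pM2r (expR_gt0 (- t))) -expRD subrr expR0.
have h : 1 <= (1 + t + t ^+ 2) * (1 - t) by nra.
apply: (le_trans h); apply: ler_wpM2l; first by nra.
by have := expR_ge1Dx (- t).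
Qed.

Lemma expR_Nmul_lt_eventually (c e : R) : 0 < c -> 0 < e ->
  exists N, forall n, (N <= n)%N -> expR (- (n%:R * c)) < e.
Proof.
move=> c_gt0 e_gt0; exists (Num.Def.archi_bound (e^-1 / c)) => n Nn.
have ltn : e^-1 / c < n%:R.
  apply: (lt_le_trans (archi_boundP _)); last by rewrite ler_nat.
  by rewrite divr_ge0 // ltW // invr_gt0.
have lt_nc : e^-1 < expR (n%:R * c).
  apply: (lt_le_trans _ (expR_ge1Dx _)); rewrite ltr_pdivrMr // in ltn.
  by apply: (lt_trans ltn); rewrite ltrDr.
rewrite expRN -[e]invrK ltf_pV2 ?posrE ?expR_gt0 ?invr_gt0 //.
Qed.

Lemma ln_le_of_log2_div (x b : R) (n : nat) : (0 < n)%N ->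
  log2 x / n%:R <= b -> ln x <= n%:R * (b * ln 2).
Proof.
move=> n_gt0; rewrite ler_pdivrMr ?ltr0n // /log2 ler_pdivrMr ?ln2_gt0 //.
by rewrite mulrA (mulrC n%:R).
Qed.

End ExpLn.

Section Iid.
Variable R : realType.

Lemma sum_tuple_prod (T : finType) (n : nat) (f : 'I_n -> T -> R) :
  \sum_(t : n.-tuple T) \prod_(i < n) f i (tnth t i) = \prod_(i < n) \sum_(a : T) f i a.
Proof.
rewrite bigA_distr_bigA /=.
rewrite (reindex (fun g : {ffun 'I_n -> T} => [tuple g i | i < n])) /=.
  by apply: eq_bigr => g _; apply: eq_bigr => i _; rewrite tnth_mktuple.
exists (fun t : n.-tuple T => [ffun i => tnth t i]) => [g _|t _].
  by apply/ffunP => i; rewrite ffunE tnth_mktuple.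
by apply: eq_from_tnth => i; rewrite tnth_mktuple ffunE.
Qed.

Lemma sum_iid (T1 T2 : finType) (g : T1 -> T2 -> R) (n : nat) :
  \sum_(x1 : n.-tuple T1) \sum_(x2 : n.-tuple T2) iid g x1 x2
  = (\sum_(a : T1) \sum_(b : T2) g a b) ^+ n.
Proof.
under eq_bigr => x1 _ do rewrite (sum_tuple_prod (fun i b => g (tnth x1 i) b)).
by rewrite (sum_tuple_prod (fun i a => \sum_b g a b)) prodr_const card_ord.
Qed.

End Iid.

Section Moments.
Variable R : realType.
Variables (T1 T2 : finType) (p r : T1 -> T2 -> R).
Hypothesis p_ge0 : forall a b, 0 <= p a b.
Hypothesis p_sum1 : \sum_a \sum_b p a b = 1.
Hypothesis r_in01 : forall a b, 0 < p a b -> 0 < r a b <= 1.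

(* The conditional entropies and the joint entropy are all of this form,
   with r the corresponding conditional or joint pmf. *)
Definition xentropy : R :=
  - \sum_a \sum_b (if p a b == 0 then 0 else p a b * log2 (r a b)).

Definition log_sqr_moment : R := \sum_a \sum_b p a b * ln (r a b) ^+ 2.

Definition mgf (lam : R) : R := \sum_a \sum_b p a b * expR (lam * ln (r a b)).

Lemma log_sqr_moment_ge0 : 0 <= log_sqr_moment.
Proof. by do 2!(apply: sumr_ge0 => ? _); rewrite mulr_ge0 ?sqr_ge0. Qed.

Lemma mgf_ge0 lam : 0 <= mgf lam.
Proof. by do 2!(apply: sumr_ge0 => ? _); rewrite mulr_ge0 ?expR_ge0. Qed.

Lemma mgf_le_expR lam : 0 <= lam ->
  mgf lam <= expR (- lam * (xentropy * ln 2) + lam ^+ 2 * log_sqr_moment).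
Proof.
move=> lam_ge0; apply: le_trans (expR_ge1Dx _).
have -> : 1 + (- lam * (xentropy * ln 2) + lam ^+ 2 * log_sqr_moment) =
   \sum_a \sum_b (p a b + lam * ln 2 * (if p a b == 0 then 0 else p a b * log2 (r a b))
        + lam ^+ 2 * (p a b * ln (r a b) ^+ 2)).
  rewrite /xentropy /log_sqr_moment -p_sum1.
  under [RHS]eq_bigr => a _ do rewrite !big_split /= -!mulr_sumr.
  rewrite !big_split /= -!mulr_sumr; ring.
apply: ler_sum => a _; apply: ler_sum => b _.
have [->|p_gt0] := eqVneq (p a b) 0; first by rewrite !(mul0r, mulr0, addr0).
have {}p_gt0 : 0 < p a b by rewrite lt0r p_gt0 p_ge0.
have /andP[r_gt0 r_le1] := r_in01 p_gt0.
have -> : lam * ln 2 * (p a b * log2 (r a b)) = p a b * (lam * ln (r a b)).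
  by rewrite /log2; field; rewrite gt_eqF ?ln2_gt0.
have := ler_wpM2l (ltW p_gt0) (expR_le_quadratic (mulr_ge0_le0 lam_ge0 (ln_le0 r_le1))).
by move/le_trans; apply; rewrite le_eqVlt; apply/predU1l; ring.
Qed.

End Moments.

Section OneShot.
Variable R : realType.

(* Split on whether expR L <= th; otherwise (expR L / th) ^ lam >= 1. *)
Lemma le_threshold_split (a nu L th lam : R) : 0 <= nu -> 0 < th -> 0 <= lam ->
  a = nu * expR L -> a <= th * nu + expR (- lam * ln th) * (a * expR (lam * L)).
Proof.
move=> nu_ge0 th_gt0 lam_ge0 ->.
have a_ge0 : 0 <= nu * expR L by rewrite mulr_ge0 ?expR_ge0.
have [L_le|L_gt] := lerP L (ln th).
  apply: ler_wpDr; first by rewrite !mulr_ge0 ?expR_ge0.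
  by rewrite mulrC ler_wpM2r // -(lnK th_gt0) ler_expR.
apply: ler_wpDl; first by rewrite mulr_ge0 // ltW.
rewrite mulrCA -expRD -[X in X <= _]mulr1 ler_wpM2l //.
apply: le_trans (expR_ge1Dx _); rewrite lerDl mulNr addrC -mulrBr.
by rewrite mulr_ge0 // subr_ge0 ltW.
Qed.

Variables (T1 T2 : finType) (p r : T1 -> T2 -> R) (n : nat).
Hypothesis p_ge0 : forall a b, 0 <= p a b.
Hypothesis r_in01 : forall a b, 0 < p a b -> 0 < r a b <= 1.
Variable nu : n.-tuple T1 -> n.-tuple T2 -> R.
Hypothesis nu_ge0 : forall x1 x2, 0 <= nu x1 x2.
Hypothesis iid_factor : forall x1 x2, iid p x1 x2 = nu x1 x2 * iid r x1 x2.

Lemma iid_le_threshold_split th lam x1 x2 : 0 < th -> 0 <= lam ->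
  iid p x1 x2 <= th * nu x1 x2
    + expR (- lam * ln th) * iid (fun a b => p a b * expR (lam * ln (r a b))) x1 x2.
Proof.
move=> th_gt0 lam_ge0.
have [/forallP p_gt0|] := boolP [forall i, 0 < p (tnth x1 i) (tnth x2 i)].
  pose L := \sum_(i < n) ln (r (tnth x1 i) (tnth x2 i)).
  have iid_rE : iid r x1 x2 = expR L.
    rewrite /L expR_sum; apply: eq_bigr => i _; rewrite lnK // posrE.
    by case/andP: (r_in01 (p_gt0 i)).
  have -> : iid (fun a b => p a b * expR (lam * ln (r a b))) x1 x2
      = iid p x1 x2 * expR (lam * L) by rewrite /iid big_split /= /L mulr_sumr expR_sum.
  by apply: le_threshold_split; rewrite // iid_factor iid_rE.
rewrite negb_forall => /existsP[i]; rewrite -leNgt => p_le0.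
have p0 : p (tnth x1 i) (tnth x2 i) = 0 by apply: le_anti; rewrite p_le0 p_ge0.
have -> : iid p x1 x2 = 0 by rewrite /iid (bigD1 i) //= p0 mul0r.
apply: addr_ge0; first by rewrite mulr_ge0 // ltW.
by rewrite mulr_ge0 ?expR_ge0 // prodr_ge0 // => j _; rewrite mulr_ge0 ?expR_ge0.
Qed.

Lemma sum_iid_le_threshold_split (D : n.-tuple T1 -> n.-tuple T2 -> bool) (c th lam : R) :
  \sum_x1 \sum_x2 (if D x1 x2 then nu x1 x2 else 0) <= c -> 0 < th -> 0 <= lam ->
  \sum_x1 \sum_x2 (if D x1 x2 then iid p x1 x2 else 0)
    <= th * c + expR (- lam * ln th) * mgf p r lam ^+ n.
Proof.
move=> nuD_le th_gt0 lam_ge0; rewrite /mgf -sum_iid mulr_sumr.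
apply: le_trans (lerD (ler_wpM2l (ltW th_gt0) nuD_le) (lexx _)).
rewrite mulr_sumr -big_split; apply: ler_sum => x1 _.
rewrite mulr_sumr mulr_sumr -big_split; apply: ler_sum => x2 _.
case: (D x1 x2); first exact: iid_le_threshold_split.
by rewrite /= mulr0 add0r mulr_ge0 ?expR_ge0 // prodr_ge0 // => i _; rewrite mulr_ge0 ?expR_ge0.
Qed.

End OneShot.

Section Converse.
Variable R : realType.

Lemma chernoff_exponent_bound (h d K lam C G : R) (n : nat) :
  0 < C -> 0 <= G -> G <= expR (- lam * h + lam ^+ 2 * K) ->
  ln C <= n%:R * (h - 3 / 4 * d) ->
  expR (- (n%:R * (h - d / 4))) * C
    + expR (- lam * ln (expR (- (n%:R * (h - d / 4))))) * G ^+ n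
  <= expR (- (n%:R * (d / 2))) + expR (- (n%:R * (lam * (d / 4 - lam * K)))).
Proof.
move=> C_gt0 G_ge0 G_le lnC_le; apply: lerD.
  rewrite -[C](lnK C_gt0) -expRD ler_expR.
  have -> : - (n%:R * (d / 2)) = - (n%:R * (h - d / 4)) + n%:R * (h - 3 / 4 * d) by field.
  by rewrite lerD2l.
have Gn_le : G ^+ n <= expR (n%:R * (- lam * h + lam ^+ 2 * K)).
  by rewrite expRM_natl lerXn2r ?nnegrE ?expR_ge0.
rewrite expRK; apply: (le_trans (ler_wpM2l (expR_ge0 _) Gn_le)).
by rewrite -expRD ler_expR le_eqVlt; apply/predU1l; ring.
Qed.

Variables (T1 T2 : finType) (p r : T1 -> T2 -> R).
Hypothesis p_ge0 : forall a b, 0 <= p a b.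
Hypothesis p_sum1 : \sum_a \sum_b p a b = 1.
Hypothesis r_in01 : forall a b, 0 < p a b -> 0 < r a b <= 1.

Lemma xentropy_le_rate (Rt eps : R) (C : nat -> nat) (succ : nat -> R) :
  eps < 1 -> (forall n, 0 < C n)%N ->
  (forall n th lam, 0 < th -> 0 <= lam ->
     succ n <= th * (C n)%:R + expR (- lam * ln th) * mgf p r lam ^+ n) ->
  (forall gamma, 0 < gamma -> exists n0, forall n, (n0 <= n)%N ->
     log2 (C n)%:R / n%:R <= Rt + gamma /\ 1 - eps <= succ n) ->
  xentropy p r <= Rt.
Proof.
(* With d the entropy gap in nats, the threshold th = expR (- n (H ln 2 - d/4))
   and lam = d / (8 (K + 1)) make both terms of the one-shot bound decay
   exponentially in n. *)
move=> eps_lt1 C_gt0 succ_le rate; rewrite leNgt; apply/negP => ltRH.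
set H := xentropy p r; set K := log_sqr_moment p r.
have K_ge0 : 0 <= K := log_sqr_moment_ge0 r p_ge0.
pose d := (H - Rt) * ln 2.
have d_gt0 : 0 < d by rewrite mulr_gt0 ?subr_gt0 ?ln2_gt0.
pose lam := d / (8 * (K + 1)).
have lam_gt0 : 0 < lam by rewrite divr_gt0 // mulr_gt0 //; lra.
have lamK : lam * K <= d / 8.
  have -> : d / 8 = lam * K + lam by rewrite /lam; field; lra.
  lra.
have e_gt0 : 0 < (1 - eps) / 2 by lra.
have [n0 rate_n0] := rate ((H - Rt) / 4) ltac:(lra).
have [N1 small1] := expR_Nmul_lt_eventually (c := d / 2) ltac:(lra) e_gt0.
have [N2 small2] := expR_Nmul_lt_eventually (c := lam * (d / 8)) ltac:(nra) e_gt0.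
pose n := maxn (maxn n0 1) (maxn N1 N2).
have [rate_n succ_n] := rate_n0 n (leq_trans (leq_maxl n0 1) (leq_maxl _ _)).
have lnC : ln (C n)%:R <= n%:R * (H * ln 2 - 3 / 4 * d).
  have n_gt0 : (0 < n)%N := leq_trans (leq_maxr n0 1) (leq_maxl _ _).
  rewrite (_ : H * ln 2 - 3 / 4 * d = (Rt + (H - Rt) / 4) * ln 2); last by rewrite /d; field.
  exact: ln_le_of_log2_div n_gt0 rate_n.
have C_pos m : 0 < (C m)%:R :> R by rewrite ltr0n.
have mgf_le := mgf_le_expR p_ge0 p_sum1 r_in01 (ltW lam_gt0).
have := le_trans (succ_le n _ lam (expR_gt0 _) (ltW lam_gt0))
  (chernoff_exponent_bound (C_pos n) (mgf_ge0 r p_ge0 _) mgf_le lnC).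
rewrite -/K => succ_n_le.
have slow : expR (- (n%:R * (lam * (d / 4 - lam * K)))) <= expR (- (n%:R * (lam * (d / 8)))).
  rewrite ler_expR lerN2; apply: ler_wpM2l; first exact: ler0n.
  rewrite ler_pM2l //; lra.
have := small1 n (leq_trans (leq_maxl N1 N2) (leq_maxr _ _)).
have := small2 n (leq_trans (leq_maxr N1 N2) (leq_maxr _ _)).
lra.
Qed.

End Converse.

Section Marginals.
Variable R : realType.
Variables (A B : finType) (p : A -> B -> R).
Hypothesis p_ge0 : forall a b, 0 <= p a b.
Hypothesis p_sum1 : \sum_a \sum_b p a b = 1.

Lemma pmf_le_marg1 a b : p a b <= marg1 p a.
Proof. by rewrite /marg1 (bigD1 b) //= lerDl sumr_ge0. Qed.

Lemma pmf_le_marg2 a b : p a b <= marg2 p b.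
Proof. by rewrite /marg2 (bigD1 a) //= lerDl sumr_ge0. Qed.

Lemma pmf_div_marg1_in01 a b : 0 < p a b -> 0 < p a b / marg1 p a <= 1.
Proof.
move=> p_gt0; have m_gt0 := lt_le_trans p_gt0 (pmf_le_marg1 a b).
by rewrite divr_gt0 //= ler_pdivrMr // mul1r pmf_le_marg1.
Qed.

Lemma pmf_div_marg2_in01 a b : 0 < p a b -> 0 < p a b / marg2 p b <= 1.
Proof.
move=> p_gt0; have m_gt0 := lt_le_trans p_gt0 (pmf_le_marg2 a b).
by rewrite divr_gt0 //= ler_pdivrMr // mul1r pmf_le_marg2.
Qed.

Lemma pmf_in01 a b : 0 < p a b -> 0 < p a b <= 1.
Proof.
move=> p_gt0; rewrite p_gt0 -p_sum1 (le_trans (pmf_le_marg1 a b)) //.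
by rewrite /marg1 (bigD1 a) //= lerDl sumr_ge0 // => a' _; rewrite sumr_ge0.
Qed.

Lemma iid_factor_marg1 n (x1 : n.-tuple A) (x2 : n.-tuple B) :
  iid p x1 x2 = \prod_(i < n) marg1 p (tnth x1 i) * iid (fun a b => p a b / marg1 p a) x1 x2.
Proof.
rewrite /iid -big_split /=; apply: eq_bigr => i _.
have [m0|m_neq0] := eqVneq (marg1 p (tnth x1 i)) 0; last by rewrite mulrC divfK.
have p0 : p (tnth x1 i) (tnth x2 i) = 0.
  by apply: le_anti; rewrite p_ge0 -m0 pmf_le_marg1.
by rewrite m0 p0 mul0r.
Qed.

Lemma iid_factor_marg2 n (x1 : n.-tuple A) (x2 : n.-tuple B) :
  iid p x1 x2 = \prod_(i < n) marg2 p (tnth x2 i) * iid (fun a b => p a b / marg2 p b) x1 x2.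
Proof.
rewrite /iid -big_split /=; apply: eq_bigr => i _.
have [m0|m_neq0] := eqVneq (marg2 p (tnth x2 i)) 0; last by rewrite mulrC divfK.
have p0 : p (tnth x1 i) (tnth x2 i) = 0.
  by apply: le_anti; rewrite p_ge0 -m0 pmf_le_marg2.
by rewrite m0 p0 mul0r.
Qed.

Lemma sum_prod_marg1 n : \sum_(x1 : n.-tuple A) \prod_(i < n) marg1 p (tnth x1 i) = 1.
Proof. by rewrite (sum_tuple_prod (fun _ => marg1 p)) p_sum1 prodr_const expr1n. Qed.

Lemma sum_prod_marg2 n : \sum_(x2 : n.-tuple B) \prod_(i < n) marg2 p (tnth x2 i) = 1.
Proof.
rewrite (sum_tuple_prod (fun _ => marg2 p)) /marg2 exchange_big /= p_sum1.
by rewrite prodr_const expr1n.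
Qed.

End Marginals.

Lemma sum_if_le_card (R : realType) (A B : finType) (D : A -> B -> bool) (w : A -> R) (c : nat) :
  (forall a, #|[pred b | D a b]| <= c)%N -> (forall a, 0 <= w a) -> \sum_a w a = 1 ->
  \sum_a \sum_b (if D a b then w a else 0) <= c%:R.
Proof.
move=> card_le w_ge0 w_sum1.
apply: (@le_trans _ _ (\sum_a w a * c%:R)); last by rewrite -mulr_suml w_sum1 mul1r.
apply: ler_sum => a _.
rewrite -big_mkcond sumr_const -[w a *+ _]mulr_natr ler_wpM2l // ler_nat.
exact: card_le.
Qed.

Section Decoding.
Variables (F1 F2 : finFieldType) (n : nat) (S : dsystem F1 F2 n).

Lemma encrypt_inj_decodes k1 k2 :
  {in [pred x | decodes S x.1 x.2] &, injective (fun x => (Phi1 S k1 x.1, Phi2 S k2 x.2))}.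
Proof.
move=> [x1 x2] [y1 y2]; rewrite !inE /decodes /= => /eqP Dx /eqP Dy [e1 e2].
by have := Defs.factor S k1 k2 x1 x2; rewrite e1 e2 Defs.factor Dx Dy.
Qed.

Let k1 := nseq_tuple n (0 : F1).
Let k2 := nseq_tuple n (0 : F2).

Lemma card_C1_gt0 : (0 < #|C1 S|)%N.
Proof. by apply/card_gt0P; exists (Phi1 S k1 k1). Qed.

Lemma card_C2_gt0 : (0 < #|C2 S|)%N.
Proof. by apply/card_gt0P; exists (Phi2 S k2 k2). Qed.

Lemma card_decodes_le : (#|[pred x | decodes S x.1 x.2]| <= #|C1 S| * #|C2 S|)%N.
Proof. by rewrite -(card_in_imset (@encrypt_inj_decodes k1 k2)) -card_prod max_card. Qed.

Lemma card_decodes_fiber2 x2 : (#|[pred x1 | decodes S x1 x2]| <= #|C1 S|)%N.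
Proof.
have inj : {in [pred x1 | decodes S x1 x2] &, injective (Phi1 S k1)}.
  move=> x y Dx Dy e; have := @encrypt_inj_decodes k1 k2 (x, x2) (y, x2) Dx Dy.
  by rewrite /= e => /(_ erefl) [].
by rewrite -(card_in_imset inj) max_card.
Qed.

Lemma card_decodes_fiber1 x1 : (#|[pred x2 | decodes S x1 x2]| <= #|C2 S|)%N.
Proof.
have inj : {in [pred x2 | decodes S x1 x2] &, injective (Phi2 S k2)}.
  move=> x y Dx Dy e; have := @encrypt_inj_decodes k1 k2 (x1, x) (x1, y) Dx Dy.
  by rewrite /= e => /(_ erefl) [].
by rewrite -(card_in_imset inj) max_card.
Qed.

Variable R : realType.

Definition succ_prob (pX : F1 -> F2 -> R) : R :=
  \sum_x1 \sum_x2 (if decodes S x1 x2 then iid pX x1 x2 else 0).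

Lemma succ_probE (pX : F1 -> F2 -> R) : \sum_a \sum_b pX a b = 1 ->
  succ_prob pX = 1 - err_prob pX S.
Proof.
move=> p_sum1; apply/eqP; rewrite eq_sym subr_eq -(expr1n _ n) -p_sum1 -sum_iid.
rewrite /succ_prob /err_prob -big_split; apply/eqP/eq_bigr => x1 _.
by rewrite -big_split; apply: eq_bigr => x2 _; case: decodes; rewrite /= ?addr0 ?add0r.
Qed.

End Decoding.

Lemma sum_decodes_le (F1 F2 : finFieldType) (n : nat) (S : dsystem F1 F2 n) (R : realType) :
  \sum_x1 \sum_x2 (if decodes S x1 x2 then 1 else 0) <= (#|C1 S| * #|C2 S|)%:R :> R.
Proof. by rewrite pair_big -big_mkcond sumr_const ler_nat card_decodes_le. Qed.

Section RateBounds.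
Variable R : realType.
Variables (F1 F2 : finFieldType) (pX : F1 -> F2 -> R).
Hypothesis p_ge0 : forall a b, 0 <= pX a b.
Hypothesis p_sum1 : \sum_a \sum_b pX a b = 1.
Variables (eps R1 R2 : R) (sys : forall n, dsystem F1 F2 n).
Hypothesis eps_lt1 : eps < 1.
Hypothesis sys_rates : forall gamma, 0 < gamma -> exists n0, forall n, (n0 <= n)%N ->
  [/\ log2 #|C1 (sys n)|%:R / n%:R <= R1 + gamma,
      log2 #|C2 (sys n)|%:R / n%:R <= R2 + gamma & err_prob pX (sys n) <= eps].

Let succ_prob_ge n : err_prob pX (sys n) <= eps -> 1 - eps <= succ_prob (sys n) pX.
Proof. by rewrite succ_probE // lerD2l lerN2. Qed.

Lemma cond_entropy12_le_rate1 : cond_entropy12 pX <= R1.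
Proof.
apply: (xentropy_le_rate p_ge0 p_sum1 (pmf_div_marg2_in01 p_ge0)
  (C := fun n => #|C1 (sys n)|) (succ := fun n => succ_prob (sys n) pX) eps_lt1).
- by move=> n; exact: card_C1_gt0.
- move=> n th lam th_gt0 lam_ge0.
  apply: (sum_iid_le_threshold_split p_ge0 (pmf_div_marg2_in01 p_ge0)
    (nu := fun _ x2 => \prod_i marg2 pX (tnth x2 i))) => //.
  + by move=> _ x2; rewrite prodr_ge0 // => i _; rewrite sumr_ge0.
  + exact: iid_factor_marg2.
  rewrite exchange_big; apply: (sum_if_le_card (D := fun x2 x1 => decodes _ x1 x2)).
  + exact: card_decodes_fiber2.
  + by move=> x2; rewrite prodr_ge0 // => i _; rewrite sumr_ge0.
  exact: sum_prod_marg2.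
- move=> g g_gt0; have [n0 rates] := sys_rates g_gt0.
  by exists n0 => n /rates[rate1 _ err]; split; last exact: succ_prob_ge.
Qed.

Lemma cond_entropy21_le_rate2 : cond_entropy21 pX <= R2.
Proof.
apply: (xentropy_le_rate p_ge0 p_sum1 (pmf_div_marg1_in01 p_ge0)
  (C := fun n => #|C2 (sys n)|) (succ := fun n => succ_prob (sys n) pX) eps_lt1).
- by move=> n; exact: card_C2_gt0.
- move=> n th lam th_gt0 lam_ge0.
  apply: (sum_iid_le_threshold_split p_ge0 (pmf_div_marg1_in01 p_ge0)
    (nu := fun x1 _ => \prod_i marg1 pX (tnth x1 i))) => //.
  + by move=> x1 _; rewrite prodr_ge0 // => i _; rewrite sumr_ge0.
  + exact: iid_factor_marg1.
  apply: sum_if_le_card; first exact: card_decodes_fiber1.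
  + by move=> x1; rewrite prodr_ge0 // => i _; rewrite sumr_ge0.
  exact: sum_prod_marg1.
- move=> g g_gt0; have [n0 rates] := sys_rates g_gt0.
  by exists n0 => n /rates[_ rate2 err]; split; last exact: succ_prob_ge.
Qed.

Lemma joint_entropy_le_rate_sum : joint_entropy pX <= R1 + R2.
Proof.
apply: (xentropy_le_rate p_ge0 p_sum1 (pmf_in01 p_ge0 p_sum1)
  (C := fun n => (#|C1 (sys n)| * #|C2 (sys n)|)%N)
  (succ := fun n => succ_prob (sys n) pX) eps_lt1).
- by move=> n; rewrite muln_gt0 card_C1_gt0 card_C2_gt0.
- move=> n th lam th_gt0 lam_ge0.
  apply: (sum_iid_le_threshold_split p_ge0 (pmf_in01 p_ge0 p_sum1) (nu := fun _ _ => 1)) => //.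
  + by move=> x1 x2; rewrite mul1r.
  exact: sum_decodes_le.
- move=> g g_gt0; have [n0 rates] := @sys_rates (g / 2) ltac:(lra).
  exists n0 => n /rates[rate1 rate2 err]; split; last exact: succ_prob_ge.
  have C_gt0 (C : finType) : (0 < #|C|)%N -> (#|C|%:R : R) \in Num.pos by rewrite posrE ltr0n.
  rewrite natrM /log2 lnM ?C_gt0 ?card_C1_gt0 ?card_C2_gt0 // !mulrDl.
  rewrite /log2 in rate1 rate2; lra.
Qed.

End RateBounds.

Theorem theorem2 (R : realType) (F1 F2 : finFieldType)
  (pX pK : F1 -> F2 -> R) (delta0 : R) :
  is_pmf2 pX -> is_pmf2 pK -> 0 < delta0 ->
  forall eps delta : R, 0 < eps < 1 -> 0 < delta <= delta0 ->
  forall R1 R2 : R,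
    reliable_secure_rate pX pK eps delta R1 R2 -> R_sw pX R1 R2.
Proof.
move=> [p_ge0 p_sum1] _ _ eps delta /andP[_ eps_lt1] _ R1 R2 [sys reliable].
have sys_rates gamma : 0 < gamma -> exists n0, forall n, (n0 <= n)%N ->
    [/\ log2 #|C1 (sys n)|%:R / n%:R <= R1 + gamma,
        log2 #|C2 (sys n)|%:R / n%:R <= R2 + gamma & err_prob pX (sys n) <= eps].
  move=> gamma_gt0; have [n0 bounds] := reliable gamma gamma_gt0.
  by exists n0 => n /bounds[rate1 [rate2 [err _]]].

split; [|split].
- exact: (cond_entropy12_le_rate1 p_ge0 p_sum1 (sys := sys) eps_lt1 sys_rates).
- exact: (cond_entropy21_le_rate2 p_ge0 p_sum1 (sys := sys) eps_lt1 sys_rates).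
- exact: (joint_entropy_le_rate_sum p_ge0 p_sum1 (sys := sys) eps_lt1 sys_rates).
Qed.
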